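(* Assume $|J|=1$, the travel times $\tau$ have a convex potential $\Phi$, and all externality factors $g_{i,p}$ are constant. Then for every $0\le\lambda_1<\lambda_2$ and all $x_1\in\mathrm{WE}(\lambda_1)$, $x_2\in\mathrm{WE}(\lambda_2)$, it holds that $G(x_1)\ge G(x_2)$ and $\Phi(x_1)\le\Phi(x_2)$.
   Context: Let $G=(V,E)$ be a directed graph and $I$ a finite set of commodities; commodity $i$ has source $s_i$, sink $t_i$, demand $d_i>0$; $\mathcal P_i$ is its set of simple $s_i$–$t_i$ paths, $\mathcal P=\{(i,p)\}$. A flow $x\in\mathbb{R}^{\mathcal P}_{\ge0}$ is feasible if $\sum_{p\in\mathcal P_i}x_{i,p}=d_i$ for all $i$; $\mathcal F$ is the set of feasible flows. There is one externality class with constant factors $g_{i,p}\ge0$, $G(x)=\sum_{(i,p)}g_{i,p}x_{i,p}$. Travel times $\tau_{i,p}:\mathcal F\to\mathbb{R}$ have a potential: a differentiable $\Phi:\mathbb{R}^{\mathcal P}\to\mathbb{R}$ with $\tau_{i,p}(x)=\partial\Phi/\partial x_{i,p}(x)$ for $x\in\mathcal F$, assumed convex. For $\lambda\ge0$, $c^\lambda_{i,p}(x)=\tau_{i,p}(x)+\lambda g_{i,p}$, and $x\in\mathrm{WE}(\lambda)$ means $x\in\mathcal F$ and $x_{i,p}>0$ implies $c^\lambda_{i,p}(x)\le c^\lambda_{i,q}(x)$ for all $q\in\mathcal P_i$. *)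

From HB Require Import structures.
From mathcomp Require Import all_boot all_order all_algebra.
From mathcomp Require Import all_classical all_reals all_analysis.
Import Order.TTheory GRing.Theory Num.Theory.
Import numFieldNormedType.Exports.
Set Implicit Arguments.
Unset Strict Implicit.
Unset Printing Implicit Defensive.
Local Open Scope ring_scope.

Section Network.
(* directed graph (V, E), commodities I with sources s and sinks t *)
Variables (V : finType) (E : rel V) (I : finType) (s t : I -> V).

Definition is_simple_path (i : I) (p : seq V) : bool :=
  if p is v :: q then [&& v == s i, path E v q, last v q == t i & uniq p]
  else false.

Definition uniq_seqs : seq (seq V) :=
  flatten [seq permutations (enum A) | A : {set V} <- enum {: {set V}}].

Definition path_pairs : seq (I * seq V) :=
  [seq ip <- [seq (i, p) | i <- enum I, p <- uniq_seqs]
     | is_simple_path ip.1 ip.2].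

Definition Pidx : finType := seq_sub path_pairs.

Definition comm (k : Pidx) : I := (val k).1.
Definition route (k : Pidx) : seq V := (val k).2.

Definition npaths : nat := #|{: Pidx}|.

Variable R : realType.

(* R^P, realised as row vectors indexed by an enumeration of P *)
Definition flowT := 'rV[R]_npaths.
Definition xval (x : flowT) (k : Pidx) : R := x ord0 (enum_rank k).
Definition unitv (k : Pidx) : flowT := delta_mx ord0 (enum_rank k).

Definition feasible (d : I -> R) (x : flowT) : Prop :=
  (forall k, 0 <= xval x k) /\
  (forall i : I, \sum_(k : Pidx | comm k == i) xval x k = d i).

Definition Gext (g : Pidx -> R) (x : flowT) : R :=
  \sum_(k : Pidx) g k * xval x k.

Definition cost (tau : Pidx -> flowT -> R) (g : Pidx -> R) (lam : R)
  (k : Pidx) (x : flowT) : R := tau k x + lam * g k.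

Definition WE (d : I -> R) (tau : Pidx -> flowT -> R) (g : Pidx -> R)
  (lam : R) (x : flowT) : Prop :=
  feasible d x /\
  forall k q : Pidx, comm q = comm k -> 0 < xval x k ->
    cost tau g lam k x <= cost tau g lam q x.

Definition is_potential (d : I -> R) (tau : Pidx -> flowT -> R)
  (Phi : flowT -> R) : Prop :=
  (forall x : flowT, differentiable Phi x) /\
  (forall x : flowT, feasible d x -> forall k, derive Phi x (unitv k) = tau k x).

Definition convex_fun (Phi : flowT -> R) : Prop :=
  forall (x y : flowT) (a : R), 0 <= a <= 1 ->
    Phi (a *: x + (1 - a) *: y) <= a * Phi x + (1 - a) * Phi y.

End Network.

(* Equilibria satisfy a variational inequality: x in WE(lam) gives
   <tau(x) + lam g, y - x> >= 0 for every feasible y, and this pairing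
   splits as D Phi(x)(y - x) + lam (G y - G x).  Adding the inequalities for
   (x1, lam1) against x2 and for (x2, lam2) against x1, the derivative terms
   sum to a non-positive quantity by convexity (monotone gradient), leaving
   (lam2 - lam1) (G x1 - G x2) >= 0.  Then the tangent inequality
   Phi x2 - Phi x1 >= D Phi(x1)(x2 - x1) >= lam1 (G x1 - G x2) >= 0. *)
From HB Require Import structures.
From mathcomp Require Import all_boot all_order all_algebra.
From mathcomp Require Import all_classical all_reals all_analysis.
From mathcomp Require Import ring lra.
Import numFieldNormedType.Exports.
Import Order.TTheory GRing.Theory Num.Theory.
Set Implicit Arguments.
Unset Strict Implicit.
Unset Printing Implicit Defensive.
Local Open Scope ring_scope.

Section ConvexDerivative.
Variables (R : realType) (U : normedModType R) (f : U -> R).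
Hypothesis f_convex : forall (x y : U) (a : R), 0 <= a <= 1 ->
  f (a *: x + (1 - a) *: y) <= a * f x + (1 - a) * f y.

Lemma convex_tangent_le (x y : U) : differentiable f x ->
  f x + derive f x (y - x) <= f y.
Proof.
move=> df; have /cvg_ex[l fl] := @diff_derivable _ _ _ _ _ (y - x) df.
have -> : derive f x (y - x) = l by exact: cvg_lim.
rewrite addrC -lerBrDr; apply: (cvgr_to_le (cvg_dnbhs_at_right fl)).
near=> h.
have h_gt0 : 0 < h by near: h; exact: nbhs_right_gt.
have h_lt1 : h < 1 by near: h; exact: nbhs_right_lt.
rewrite /= /shift.
have -> : h *: (y - x) + x = h *: y + (1 - h) *: x.
  by rewrite scalerBr scalerBl scale1r addrAC addrA.
have fc : f (h *: y + (1 - h) *: x) <= h * f y + (1 - h) * f x.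
  by apply: f_convex; rewrite (ltW h_gt0) (ltW h_lt1).
rewrite -[h^-1 *: _]/(h^-1 * _) ler_pdivrMl //; lra.
Unshelve. all: by end_near.
Qed.

Lemma convex_derive_monotone (x y : U) :
  differentiable f x -> differentiable f y ->
  derive f x (y - x) + derive f y (x - y) <= 0.
Proof.
move=> dfx dfy.
have := convex_tangent_le y dfx; have := convex_tangent_le x dfy; lra.
Qed.

End ConvexDerivative.

Section Wardrop.
Variables (V : finType) (E : rel V) (I : finType) (s t : I -> V) (R : realType).
Local Notation P := (Pidx E s t).
Local Notation flow := (flowT E s t R).

Definition total_cost (c : P -> R) (x : flow) : R := \sum_k c k * xval x k.

Definition wardrop (c : P -> R) (x : flow) : Prop :=
  forall k q : P, comm q = comm k -> 0 < xval x k -> c k <= c q.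

Variables (d : I -> R).
Hypothesis d_pos : forall i, 0 < d i.

(* Within commodity i, both sides are compared after scaling by
   d i = sum_q y_q = sum_k x_k, which turns them into double sums over
   pairs (k, q) that can be compared termwise. *)
Lemma wardrop_total_cost_le (c : P -> R) (x y : flow) :
  feasible d x -> wardrop c x -> feasible d y ->
  total_cost c x <= total_cost c y.
Proof.
move=> [x_ge0 x_dem] wx [y_ge0 y_dem].
rewrite /total_cost (partition_big (@comm _ _ _ s t) xpredT) //.
rewrite [leRHS](partition_big (@comm _ _ _ s t) xpredT) //=.
apply: ler_sum => i _; rewrite -(ler_pM2l (d_pos i)).
have -> : d i * (\sum_(k | comm k == i) c k * xval x k) =
    \sum_(k | comm k == i) \sum_(q | comm q == i) c k * xval x k * xval y q.
  rewrite -y_dem big_distrl /=; under eq_bigr do rewrite big_distrr /=.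
  by rewrite exchange_big; apply: eq_bigr => k _; apply: eq_bigr => q _; ring.
have -> : d i * (\sum_(q | comm q == i) c q * xval y q) =
    \sum_(k | comm k == i) \sum_(q | comm q == i) c q * xval y q * xval x k.
  rewrite -x_dem big_distrl /=; apply: eq_bigr => k _.
  by rewrite big_distrr /=; apply: eq_bigr => q _; ring.
apply: ler_sum => k /eqP ik; apply: ler_sum => q /eqP iq.
have [->|xk_neq0] := eqVneq (xval x k) 0; first by rewrite !(mulr0, mul0r).
have xk_gt0 : 0 < xval x k by rewrite lt_def xk_neq0 x_ge0.
have := wx k q (etrans iq (esym ik)) xk_gt0.
have := mulr_ge0 (ltW xk_gt0) (y_ge0 q); nra.
Qed.

Variables (tau : P -> flow -> R) (Phi : flow -> R).
Hypothesis Phi_pot : is_potential d tau Phi.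

Lemma derive_potential (x w : flow) : feasible d x ->
  derive Phi x w = total_cost (tau^~ x) w.
Proof.
case: Phi_pot => dPhi dPhi_tau fx; rewrite deriveE //.
rewrite {1}(row_sum_delta w) linear_sum /=.
rewrite (reindex (@enum_rank P)) /=; last exact/onW_bij/enum_rank_bij.
by apply: eq_bigr => k _; rewrite linearZ /= -deriveE // dPhi_tau // mulrC.
Qed.

Lemma WE_variational (g : P -> R) (lam : R) (x y : flow) :
  WE d tau g lam x -> feasible d y ->
  0 <= derive Phi x (y - x) + lam * (Gext g y - Gext g x).
Proof.
move=> [fx wx] fy.
have := wardrop_total_cost_le fx wx fy; rewrite -subr_ge0.
suff -> : total_cost (cost tau g lam ^~ x) y - total_cost (cost tau g lam ^~ x) x
    = derive Phi x (y - x) + lam * (Gext g y - Gext g x) by [].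
rewrite derive_potential // /total_cost /Gext -!sumrB mulr_sumr -big_split /=.
by apply: eq_bigr => k _; rewrite /cost /xval !mxE; ring.
Qed.

End Wardrop.

Theorem lemma4p6 (V : finType) (E : rel V) (I : finType) (s t : I -> V)
  (R : realType) (d : I -> R) (d_pos : forall i, 0 < d i)
  (g : Pidx E s t -> R) (g_ge0 : forall k, 0 <= g k)
  (tau : Pidx E s t -> flowT E s t R -> R) (Phi : flowT E s t R -> R)
  (Hpot : is_potential d tau Phi) (Hconv : convex_fun Phi)
  (lam1 lam2 : R) (Hlam1 : 0 <= lam1) (Hlam12 : lam1 < lam2)
  (x1 x2 : flowT E s t R) :
  WE d tau g lam1 x1 -> WE d tau g lam2 x2 ->
  Gext g x2 <= Gext g x1 /\ Phi x1 <= Phi x2.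
Proof.
move=> WE1 WE2.
have VI1 := WE_variational d_pos Hpot WE1 WE2.1.
have VI2 := WE_variational d_pos Hpot WE2 WE1.1.
have mono := convex_derive_monotone Hconv (Hpot.1 x1) (Hpot.1 x2).
have tangent := convex_tangent_le Hconv x2 (Hpot.1 x1).
move: VI1 VI2 mono tangent.
set A := derive Phi x1 _; set B := derive Phi x2 _.
set G1 := Gext g x1; set G2 := Gext g x2.
move=> VI1 VI2 mono tangent.
have G_le : G2 <= G1.
  have : 0 <= (lam2 - lam1) * (G1 - G2) by lra.
  by rewrite pmulr_rge0 ?subr_gt0 // subr_ge0.
split=> //.
have : 0 <= lam1 * (G1 - G2) by rewrite mulr_ge0 // subr_ge0.
lra.
Qed.
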